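(* Let $N$ be a surface in a three-dimensional contact manifold with subriemannian structure, let $(v_1,v_2)$ be an adapted frame near a regular point of $N$, let $v_0$ be the Reeb field, and define functions $a_{ij}^k$ by $[v_i,v_j]=\sum_{k=0}^2a_{ij}^kv_k$ for $i,j\in\{0,1,2\}$. Then on the regular points of $N$ where the frame is defined, the curvature of transversality satisfies \[ \mathfrak r=-a_{01}^2-\mathfrak a\,a_{12}^2 . \]
   Context: A three-dimensional contact manifold $M$ carries a rank-2 distribution $\Delta$ (kernel of a contact form) with an inner product on $\Delta$. Fix the contact form $\alpha_0$ with $\ker\alpha_0=\Delta$ normalized so that $d\alpha_0(w_1,w_2)=\pm1$ for orthonormal $w_1,w_2\in\Delta_x$, with convention $d\alpha(X,Y)=X\alpha(Y)-Y\alpha(X)-\alpha([X,Y])$; the Reeb field $v_0$ satisfies $\alpha_0(v_0)=1$, $d\alpha_0(v_0,\cdot)=0$. For a surface $N\subset M$, $x\in N$ is regular if $T_xN\neq\Delta_x$. An adapted frame near a regular point is a pair of local orthonormal sections $v_1,v_2$ of $\Delta$ with $v_1$ tangent to $N$ along $N$ and $d\alpha_0(v_1,v_2)=1$. The degree of transversality (DOT) $\mathfrak a$ is the function on regular points with $v_0-\mathfrak a v_2\in TN$. The curvature of transversality (COT) is $\mathfrak r=v_1\mathfrak a-\mathfrak a^2$. *)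

From Stdlib Require Import Reals Lra ClassicalEpsilon.
Open Scope R_scope.

(** Points / tangent vectors of R^3 (a chart of the 3-manifold M). *)
Record V3 := mkV3 { c0 : R; c1 : R; c2 : R }.

Definition coord (v : V3) (i : nat) : R :=
  match i with 0%nat => c0 v | 1%nat => c1 v | _ => c2 v end.

Definition sum3 (f : nat -> R) : R := f 0%nat + f 1%nat + f 2%nat.

Definition vadd (u w : V3) : V3 := mkV3 (c0 u + c0 w) (c1 u + c1 w) (c2 u + c2 w).
Definition vscale (t : R) (u : V3) : V3 := mkV3 (t * c0 u) (t * c1 u) (t * c2 u).
Definition vsub (u w : V3) : V3 := vadd u (vscale (-1) w).
Definition vzero : V3 := mkV3 0 0 0.
Definition ebasis (i : nat) : V3 :=
  match i with 0%nat => mkV3 1 0 0 | 1%nat => mkV3 0 1 0 | _ => mkV3 0 0 1 end.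
Definition vnorm (u : V3) : R := Rabs (c0 u) + Rabs (c1 u) + Rabs (c2 u).

Definition is_open (U : V3 -> Prop) : Prop :=
  forall x, U x -> exists d, 0 < d /\ forall y, vnorm (vsub y x) < d -> U y.
Definition cont_at (f : V3 -> R) (x : V3) : Prop :=
  forall eps, 0 < eps -> exists d, 0 < d /\
    forall y, vnorm (vsub y x) < d -> Rabs (f y - f x) < eps.

Definition dir_deriv_at (f : V3 -> R) (x v : V3) (l : R) : Prop :=
  derivable_pt_lim (fun t => f (vadd x (vscale t v))) 0 l.
Definition dd (f : V3 -> R) (x v : V3) : R :=
  epsilon (inhabits 0) (fun l => dir_deriv_at f x v l).
Definition partial (i : nat) (f : V3 -> R) (x : V3) : R := dd f x (ebasis i).

Fixpoint Ck (k : nat) (U : V3 -> Prop) (f : V3 -> R) : Prop :=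
  match k with
  | O => forall x, U x -> cont_at f x
  | S k' => (forall x, U x -> cont_at f x)
         /\ (forall x, U x -> forall i, (i < 3)%nat -> exists l, dir_deriv_at f x (ebasis i) l)
         /\ (forall i, (i < 3)%nat -> Ck k' U (partial i f))
  end.
Definition smooth (U : V3 -> Prop) (f : V3 -> R) : Prop := forall k, Ck k U f.

Definition VF := V3 -> V3.
Definition smoothVF (U : V3 -> Prop) (X : VF) : Prop :=
  forall i, (i < 3)%nat -> smooth U (fun y => coord (X y) i).
Definition vf_apply (X : VF) (f : V3 -> R) (y : V3) : R :=
  sum3 (fun i => coord (X y) i * partial i f y).
Definition bracket_comp (X Y : VF) (j : nat) (y : V3) : R :=
  vf_apply X (fun z => coord (Y z) j) y - vf_apply Y (fun z => coord (X z) j) y.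
Definition bracket (X Y : VF) : VF := fun y =>
  mkV3 (bracket_comp X Y 0 y) (bracket_comp X Y 1 y) (bracket_comp X Y 2 y).

(** 1-forms (given by components) and their exterior derivative.
    dA al y u w = sum_{i,j} (d_i al_j - d_j al_i)(y) u_i w_j, which is the
    pointwise form of the convention dα(X,Y) = Xα(Y) - Yα(X) - α([X,Y]). *)
Definition Form := V3 -> V3.
Definition form_eval (al : Form) (y w : V3) : R := sum3 (fun i => coord (al y) i * coord w i).
Definition dA (al : Form) (y u w : V3) : R :=
  sum3 (fun i => sum3 (fun j =>
    (partial i (fun z => coord (al z) j) y - partial j (fun z => coord (al z) i) y)
    * coord u i * coord w j)).
(** (α ∧ dα)(e0,e1,e2) *)
Definition contact_vol (al : Form) (y : V3) : R :=
  coord (al y) 0 * dA al y (ebasis 1) (ebasis 2)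
  + coord (al y) 1 * dA al y (ebasis 2) (ebasis 0)
  + coord (al y) 2 * dA al y (ebasis 0) (ebasis 1).

Definition in_Delta (al : Form) (y w : V3) : Prop := form_eval al y w = 0.

Definition ip (g : V3 -> nat -> nat -> R) (y u w : V3) : R :=
  sum3 (fun i => sum3 (fun j => g y i j * coord u i * coord w j)).

Definition sR_contact (U : V3 -> Prop) (al0 : Form) (g : V3 -> nat -> nat -> R)
    (v0 : VF) : Prop :=
  is_open U
  /\ (forall i, (i < 3)%nat -> smooth U (fun y => coord (al0 y) i))
  /\ (forall y, U y -> contact_vol al0 y <> 0)
  /\ (forall i j, (i < 3)%nat -> (j < 3)%nat -> smooth U (fun y => g y i j))
  /\ (forall y i j, U y -> g y i j = g y j i)
  /\ (forall y w, U y -> in_Delta al0 y w -> w <> vzero -> 0 < ip g y w w)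
  /\ (forall y w1 w2, U y -> in_Delta al0 y w1 -> in_Delta al0 y w2 ->
        ip g y w1 w1 = 1 -> ip g y w2 w2 = 1 -> ip g y w1 w2 = 0 ->
        dA al0 y w1 w2 = 1 \/ dA al0 y w1 w2 = -1)
  /\ smoothVF U v0
  /\ (forall y, U y -> form_eval al0 y (v0 y) = 1 /\ forall w, dA al0 y (v0 y) w = 0).

Definition is_surface (N : V3 -> Prop) : Prop :=
  forall p, N p -> exists (O : V3 -> Prop) (F : V3 -> R),
    is_open O /\ O p /\ smooth O F
    /\ (forall y, O y -> exists i, (i < 3)%nat /\ partial i F y <> 0)
    /\ (forall y, O y -> (N y <-> F y = 0)).

Definition has_velocity (gam : R -> V3) (w : V3) : Prop :=
  forall i, (i < 3)%nat -> derivable_pt_lim (fun t => coord (gam t) i) 0 (coord w i).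
Definition curve_in (N : V3 -> Prop) (gam : R -> V3) (x : V3) : Prop :=
  (forall t, N (gam t)) /\ gam 0 = x.
Definition tangent (N : V3 -> Prop) (x w : V3) : Prop :=
  exists gam, curve_in N gam x /\ has_velocity gam w.

Definition regular (N : V3 -> Prop) (al0 : Form) (x : V3) : Prop :=
  ~ (forall w, tangent N x w <-> in_Delta al0 x w).

Definition derivN (N : V3 -> Prop) (f : V3 -> R) (x w : V3) (l : R) : Prop :=
  forall gam, curve_in N gam x -> has_velocity gam w ->
    derivable_pt_lim (fun t => f (gam t)) 0 l.

Definition adapted_frame (W : V3 -> Prop) (N : V3 -> Prop) (al0 : Form)
    (g : V3 -> nat -> nat -> R) (v1 v2 : VF) : Prop :=
  is_open W /\ smoothVF W v1 /\ smoothVF W v2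
  /\ (forall y, W y ->
        in_Delta al0 y (v1 y) /\ in_Delta al0 y (v2 y)
        /\ ip g y (v1 y) (v1 y) = 1 /\ ip g y (v2 y) (v2 y) = 1
        /\ ip g y (v1 y) (v2 y) = 0
        /\ dA al0 y (v1 y) (v2 y) = 1)
  /\ (forall y, W y -> N y -> tangent N y (v1 y)).

Definition is_DOT (W : V3 -> Prop) (N : V3 -> Prop) (al0 : Form) (v0 v2 : VF)
    (a : V3 -> R) : Prop :=
  forall y, W y -> N y -> regular N al0 y ->
    tangent N y (vsub (v0 y) (vscale (a y) (v2 y))).

Definition frame3 (v0 v1 v2 : VF) (k : nat) : VF :=
  match k with 0%nat => v0 | 1%nat => v1 | _ => v2 end.

Definition structure_functions (W : V3 -> Prop) (v0 v1 v2 : VF)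
    (A : nat -> nat -> nat -> V3 -> R) : Prop :=
  forall i j, (i < 3)%nat -> (j < 3)%nat -> forall y, W y ->
    forall m, (m < 3)%nat ->
      coord (bracket (frame3 v0 v1 v2 i) (frame3 v0 v1 v2 j) y) m
      = sum3 (fun k => A i j k y * coord (frame3 v0 v1 v2 k y) m).

(* Near the regular point x, write N as the zero set of a submersion F and put
   phi_k := v_k F.  Tangency of v1 and of v0 - a v2 gives phi_1 = 0 and phi_0 = a phi_2 on N,
   and phi_2 <> 0 at regular points since (v0, v1, v2) is a frame and grad F <> 0.  Hence
   a = phi_0 / phi_2 on N near x, and v1 a = (v1 phi_0 phi_2 - v1 phi_2 phi_0) / phi_2^2.
   Because alpha0 is constant on the frame, d alpha0 (v_i, v_j) = - a_ij^0, so the Reeb and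
   normalisation conditions give a_01^0 = 0 and a_12^0 = -1.  Applying [v0,v1] and [v1,v2] to F
   then expresses v1 phi_0 and v1 phi_2 through v0 phi_1 and v2 phi_1, and v0 phi_1 = a v2 phi_1
   because phi_1 vanishes on N and v0 - a v2 is tangent to N. *)

From Pilot Require Import Defs.
From Stdlib Require Import Reals.
From Stdlib Require Import Lra Lia FunctionalExtensionality ClassicalEpsilon.
From Coquelicot Require Coquelicot.
Open Scope R_scope.
(* [Reals] exports a record field [c1] that would shadow the coordinate. *)
Notation c1 := Defs.c1.

Ltac vec_eq := unfold vadd, vscale; simpl; f_equal; ring.

Lemma vadd_vscale0 y v : vadd y (vscale 0 v) = y.
Proof. destruct y, v; vec_eq. Qed.

Lemma vadd_vscaleA y s t v :
  vadd (vadd y (vscale s v)) (vscale t v) = vadd y (vscale (s + t) v).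
Proof. destruct y, v; vec_eq. Qed.

Lemma vnorm_ge0 u : 0 <= vnorm u.
Proof.
  unfold vnorm.
  pose proof (Rabs_pos (c0 u)); pose proof (Rabs_pos (c1 u)); pose proof (Rabs_pos (c2 u)).
  lra.
Qed.

Lemma vnorm_vadd_le u w : vnorm (vadd u w) <= vnorm u + vnorm w.
Proof.
  unfold vnorm, vadd; simpl.
  pose proof (Rabs_triang (c0 u) (c0 w)); pose proof (Rabs_triang (c1 u) (c1 w));
  pose proof (Rabs_triang (c2 u) (c2 w)). lra.
Qed.

Lemma vnorm_vscale t u : vnorm (vscale t u) = Rabs t * vnorm u.
Proof. unfold vnorm, vscale; simpl. rewrite !Rabs_mult. ring. Qed.

Lemma vnorm_ebasis i : vnorm (ebasis i) = 1.
Proof. unfold vnorm; destruct i as [|[|]]; simpl; rewrite ?Rabs_R0, ?Rabs_R1; ring. Qed.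

Lemma vsub_vadd_l y u : vsub (vadd y u) y = u.
Proof. destruct y, u; unfold vsub; vec_eq. Qed.

Lemma vnorm_vsub_vadd_l y u : vnorm (vsub (vadd y u) y) = vnorm u.
Proof. now rewrite vsub_vadd_l. Qed.

Lemma vnorm_vsub_diag y : vnorm (vsub y y) = 0.
Proof.
  unfold vnorm, vsub, vadd, vscale; simpl.
  replace (c0 y + -1 * c0 y) with 0 by ring. replace (c1 y + -1 * c1 y) with 0 by ring.
  replace (c2 y + -1 * c2 y) with 0 by ring. rewrite Rabs_R0. ring.
Qed.

Lemma sum3_le f g : (forall i, (i < 3)%nat -> f i <= g i) -> sum3 f <= sum3 g.
Proof.
  intro H. unfold sum3. pose proof (H 0%nat ltac:(lia)); pose proof (H 1%nat ltac:(lia)); pose proof (H 2%nat ltac:(lia)).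
  lra.
Qed.

Lemma Rabs_sum3_lt f b : (forall i, (i < 3)%nat -> Rabs (f i) < b i) -> Rabs (sum3 f) < sum3 b.
Proof.
  intro H. unfold sum3. pose proof (H 0%nat ltac:(lia)); pose proof (H 1%nat ltac:(lia)); pose proof (H 2%nat ltac:(lia)).
  pose proof (Rabs_triang (f 0%nat + f 1%nat) (f 2%nat)); pose proof (Rabs_triang (f 0%nat) (f 1%nat)).
  lra.
Qed.

Lemma vnorm_mkV3 u0 u1 u2 : vnorm (mkV3 u0 u1 u2) = Rabs u0 + Rabs u1 + Rabs u2.
Proof. reflexivity. Qed.

Definition near (p : V3) (P : V3 -> Prop) : Prop :=
  exists d, 0 < d /\ forall y, vnorm (vsub y p) < d -> P y.

Definition near0 (P : R -> Prop) : Prop :=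
  exists d, 0 < d /\ forall t, Rabs t < d -> P t.

Lemma near_and p (P Q : V3 -> Prop) : near p P -> near p Q -> near p (fun y => P y /\ Q y).
Proof.
  intros [d1 [Hd1 H1]] [d2 [Hd2 H2]]. exists (Rmin d1 d2); split; [now apply Rmin_pos|].
  intros y Hy. split; [apply H1 | apply H2];
    eapply Rlt_le_trans; eauto; [apply Rmin_l | apply Rmin_r].
Qed.

Lemma near_mono p (P Q : V3 -> Prop) : (forall y, P y -> Q y) -> near p P -> near p Q.
Proof. intros HPQ [d [Hd H]]. exists d; auto. Qed.

Lemma near_center p (P : V3 -> Prop) : near p P -> P p.
Proof. intros [d [Hd H]]. apply H. rewrite vnorm_vsub_diag. exact Hd. Qed.

Lemma near_near p P : near p P -> near p (fun y => near y P).
Proof.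
  intros [d [Hd H]]. exists d; split; [exact Hd|]. intros y Hy.
  exists (d - vnorm (vsub y p)); split; [lra|]. intros z Hz. apply H.
  replace (vsub z p) with (vadd (vsub z y) (vsub y p))
    by (destruct z, y, p; unfold vsub; vec_eq).
  pose proof (vnorm_vadd_le (vsub z y) (vsub y p)). lra.
Qed.

Lemma near0_and (P Q : R -> Prop) : near0 P -> near0 Q -> near0 (fun t => P t /\ Q t).
Proof.
  intros [d1 [Hd1 H1]] [d2 [Hd2 H2]]. exists (Rmin d1 d2); split; [now apply Rmin_pos|].
  intros t Ht. split; [apply H1 | apply H2];
    eapply Rlt_le_trans; eauto; [apply Rmin_l | apply Rmin_r].
Qed.

Lemma near0_mono (P Q : R -> Prop) : (forall t, P t -> Q t) -> near0 P -> near0 Q.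
Proof. intros HPQ [d [Hd H]]. exists d; auto. Qed.

Lemma derivable_pt_lim_near0 f l :
  (forall e, 0 < e -> near0 (fun h => h <> 0 -> Rabs ((f h - f 0) / h - l) < e)) ->
  derivable_pt_lim f 0 l.
Proof.
  intros H e He. destruct (H e He) as [d [Hd Hh]]. exists (mkposreal d Hd).
  intros h Hh0 Hhd. rewrite Rplus_0_l. now apply Hh.
Qed.

Lemma near0_derivable_pt_lim f l e : derivable_pt_lim f 0 l -> 0 < e ->
  near0 (fun h => h <> 0 -> Rabs ((f h - f 0) / h - l) < e).
Proof.
  intros H He. destruct (H e He) as [d Hd]. exists d; split; [apply cond_pos|].
  intros h Hhd Hh0. specialize (Hd h Hh0 Hhd). now rewrite Rplus_0_l in Hd.
Qed.

Lemma derivable_pt_lim_ext_near0 (f g : R -> R) l :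
  near0 (fun t => f t = g t) -> derivable_pt_lim f 0 l -> derivable_pt_lim g 0 l.
Proof.
  intros [d [Hd Heq]] H. apply derivable_pt_lim_near0. intros e He.
  apply (near0_mono (fun t => Rabs t < d /\ (t <> 0 -> Rabs ((f t - f 0) / t - l) < e))).
  - intros t [Ht H']. rewrite <- (Heq t), <- (Heq 0) by (rewrite ?Rabs_R0; lra). exact H'.
  - apply near0_and; [exists d; auto | now apply near0_derivable_pt_lim].
Qed.

Lemma derivable_pt_lim_shift (G : R -> R) s l :
  derivable_pt_lim (fun t => G (s + t)) 0 l <-> derivable_pt_lim G s l.
Proof.
  unfold derivable_pt_lim; split; intros H e He; destruct (H e He) as [d Hd];
  exists d; intros h Hh Hhd; specialize (Hd h Hh Hhd);
  rewrite ?Rplus_0_l, ?Rplus_0_r in *; exact Hd.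
Qed.

Lemma dir_deriv_at_shift f y s v l :
  dir_deriv_at f (vadd y (vscale s v)) v l <->
  derivable_pt_lim (fun t => f (vadd y (vscale t v))) s l.
Proof.
  unfold dir_deriv_at. rewrite <- (derivable_pt_lim_shift (fun t => f (vadd y (vscale t v)))).
  replace (fun t => f (vadd (vadd y (vscale s v)) (vscale t v)))
    with (fun t => f (vadd y (vscale (s + t) v))); [reflexivity|].
  apply functional_extensionality; intro t; now rewrite vadd_vscaleA.
Qed.

Lemma dir_deriv_at_unique f y v l1 l2 :
  dir_deriv_at f y v l1 -> dir_deriv_at f y v l2 -> l1 = l2.
Proof. apply uniqueness_limite. Qed.

Lemma dd_spec f y v : (exists l, dir_deriv_at f y v l) -> dir_deriv_at f y v (dd f y v).
Proof. apply epsilon_spec. Qed.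

Lemma dd_eq f y v l : dir_deriv_at f y v l -> dd f y v = l.
Proof. intro H. apply (dir_deriv_at_unique f y v); [apply dd_spec; eauto | exact H]. Qed.

Lemma dir_deriv_at_plus f g y v a b : dir_deriv_at f y v a -> dir_deriv_at g y v b ->
  dir_deriv_at (fun z => f z + g z) y v (a + b).
Proof. apply derivable_pt_lim_plus. Qed.

Lemma dir_deriv_at_mult f g y v a b : dir_deriv_at f y v a -> dir_deriv_at g y v b ->
  dir_deriv_at (fun z => f z * g z) y v (a * g y + f y * b).
Proof.
  intros H1 H2. pose proof (derivable_pt_lim_mult _ _ _ _ _ H1 H2) as H.
  cbv beta in H. now rewrite vadd_vscale0 in H.
Qed.

Lemma vnorm_vsub_line_lt y v d t : 0 < d -> Rabs t < d / (vnorm v + 1) ->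
  vnorm (vsub (vadd y (vscale t v)) y) < d.
Proof.
  intros Hd Ht. rewrite vnorm_vsub_vadd_l, vnorm_vscale.
  pose proof (vnorm_ge0 v); pose proof (Rabs_pos t).
  apply Rle_lt_trans with (Rabs t * (vnorm v + 1)); [nra|].
  apply (Rmult_lt_compat_r (vnorm v + 1)) in Ht; [|lra].
  now replace (d / (vnorm v + 1) * (vnorm v + 1)) with d in Ht by (field; lra).
Qed.

Lemma near_line y v (P : V3 -> Prop) : near y P -> near0 (fun t => P (vadd y (vscale t v))).
Proof.
  intros [d [Hd H]]. exists (d / (vnorm v + 1)).
  split; [apply Rdiv_lt_0_compat; pose proof (vnorm_ge0 v); lra|].
  intros t Ht. apply H. now apply vnorm_vsub_line_lt.
Qed.

Lemma dir_deriv_at_ext_near f g y v l :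
  near y (fun z => f z = g z) -> dir_deriv_at f y v l -> dir_deriv_at g y v l.
Proof.
  intros Heq. apply derivable_pt_lim_ext_near0.
  exact (near_line y v (fun z => f z = g z) Heq).
Qed.

Lemma dir_deriv_at_locally_const f y v :
  near y (fun z => f z = f y) -> dir_deriv_at f y v 0.
Proof.
  intro H. apply (dir_deriv_at_ext_near (fun _ => f y)).
  - now apply (near_mono y (fun z => f z = f y)).
  - apply derivable_pt_lim_const.
Qed.

Lemma MVT_abs (G G' : R -> R) (b : R) :
  (forall c, Rabs c <= Rabs b -> derivable_pt_lim G c (G' c)) ->
  exists c, Rabs c <= Rabs b /\ G b - G 0 = G' c * b.
Proof.
  intro H. destruct (Rtotal_order b 0) as [Hb|[Hb|Hb]].
  - destruct (MVT_cor2 G G' b 0 Hb) as [c [Hc1 Hc2]].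
    + intros c Hc; apply H. rewrite (Rabs_left b Hb), Rabs_left1; lra.
    + exists c; split; [rewrite (Rabs_left b Hb), Rabs_left1|]; lra.
  - subst. exists 0. split; [lra | ring].
  - destruct (MVT_cor2 G G' 0 b Hb) as [c [Hc1 Hc2]].
    + intros c Hc; apply H. rewrite (Rabs_right b), Rabs_right; lra.
    + exists c; split; [rewrite (Rabs_right b), Rabs_right|]; lra.
Qed.

Lemma MVT_line f D (P : R -> V3) e s :
  (forall c, P c = vadd (P 0) (vscale c e)) ->
  (forall c, Rabs c <= Rabs s -> dir_deriv_at f (P c) e (D (P c))) ->
  exists c, Rabs c <= Rabs s /\ f (P s) - f (P 0) = D (P c) * s.
Proof.
  intros HP HD. apply (MVT_abs (fun t => f (P t)) (fun c => D (P c))).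
  intros c Hc.
  replace (fun t => f (P t)) with (fun t => f (vadd (P 0) (vscale t e)))
    by (apply functional_extensionality; intro t; now rewrite <- HP).
  apply dir_deriv_at_shift. rewrite <- HP. now apply HD.
Qed.

(** * Continuity and the chain rule along curves *)

Lemma near_forall_lt3 p (P : nat -> V3 -> Prop) :
  (forall i, (i < 3)%nat -> near p (P i)) ->
  near p (fun y => forall i, (i < 3)%nat -> P i y).
Proof.
  intro H.
  apply (near_mono p (fun y => P 0%nat y /\ P 1%nat y /\ P 2%nat y)).
  - intros y (H0 & H1 & H2) [|[|[|i]]] Hi; auto; lia.
  - repeat apply near_and; apply H; lia.
Qed.

Lemma near0_forall_lt3 (P : nat -> R -> Prop) :
  (forall i, (i < 3)%nat -> near0 (P i)) ->
  near0 (fun t => forall i, (i < 3)%nat -> P i t).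
Proof.
  intro H.
  apply (near0_mono (fun t => P 0%nat t /\ P 1%nat t /\ P 2%nat t)).
  - intros t (H0 & H1 & H2) [|[|[|i]]] Hi; auto; lia.
  - repeat apply near0_and; apply H; lia.
Qed.

Lemma Rabs_mult_sub_lt x y a b e : e <= 1 -> Rabs (x - a) < e -> Rabs (y - b) < e ->
  Rabs (x * y - a * b) < e * (Rabs a + Rabs b + 1).
Proof.
  intros He1 Hx Hy.
  replace (x * y - a * b) with ((x - a) * y + a * (y - b)) by ring.
  assert (Hyb : Rabs y <= Rabs b + 1).
  { replace y with ((y - b) + b) by ring. pose proof (Rabs_triang (y - b) b). lra. }
  pose proof (Rabs_pos (x - a)); pose proof (Rabs_pos a); pose proof (Rabs_pos b).
  eapply Rle_lt_trans; [apply Rabs_triang|]. rewrite !Rabs_mult.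
  assert (Rabs (x - a) * Rabs y <= Rabs (x - a) * (Rabs b + 1)) by (apply Rmult_le_compat_l; lra).
  assert (Rabs a * Rabs (y - b) <= Rabs a * e) by (apply Rmult_le_compat_l; lra).
  assert (Rabs (x - a) * (Rabs b + 1) < e * (Rabs b + 1)) by (apply Rmult_lt_compat_r; lra).
  nra.
Qed.

Lemma exists_small_factor e K : 0 < e -> 0 < K ->
  exists eta, 0 < eta /\ eta <= 1 /\ eta * K <= e.
Proof.
  intros He HK. exists (Rmin 1 (e / K)). repeat split.
  - apply Rmin_pos; [lra | now apply Rdiv_lt_0_compat].
  - apply Rmin_l.
  - apply Rle_trans with (e / K * K); [apply Rmult_le_compat_r; [lra | apply Rmin_r]|].
    right; field; lra.
Qed.

Lemma cont_at_plus f g x : cont_at f x -> cont_at g x -> cont_at (fun z => f z + g z) x.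
Proof.
  intros Hf Hg e He.
  apply (near_mono x (fun y => Rabs (f y - f x) < e / 2 /\ Rabs (g y - g x) < e / 2)).
  - intros y [H1 H2].
    replace (f y + g y - (f x + g x)) with ((f y - f x) + (g y - g x)) by ring.
    eapply Rle_lt_trans; [apply Rabs_triang | lra].
  - apply near_and; [apply Hf | apply Hg]; lra.
Qed.

Lemma cont_at_mult f g x : cont_at f x -> cont_at g x -> cont_at (fun z => f z * g z) x.
Proof.
  intros Hf Hg e He.
  destruct (exists_small_factor e (Rabs (f x) + Rabs (g x) + 1)) as (eta & Heta & Heta1 & HetaK);
    [exact He | pose proof (Rabs_pos (f x)); pose proof (Rabs_pos (g x)); lra |].
  apply (near_mono x (fun y => Rabs (f y - f x) < eta /\ Rabs (g y - g x) < eta)).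
  - intros y [H1 H2]. pose proof (Rabs_mult_sub_lt _ _ _ _ _ Heta1 H1 H2). lra.
  - apply near_and; [apply Hf | apply Hg]; lra.
Qed.

Lemma Rabs_le_of_quotient x h w e : h <> 0 -> Rabs (x / h - w) < e ->
  Rabs x <= Rabs h * (Rabs w + e).
Proof.
  intros Hh H. replace x with (h * (x / h)) by (field; auto).
  rewrite Rabs_mult. apply Rmult_le_compat_l; [apply Rabs_pos|].
  replace (x / h) with ((x / h - w) + w) by ring.
  pose proof (Rabs_triang (x / h - w) w). lra.
Qed.

Lemma has_velocity_near0 gam w e : has_velocity gam w -> 0 < e ->
  near0 (fun h => forall i, (i < 3)%nat ->
    h <> 0 -> Rabs ((coord (gam h) i - coord (gam 0) i) / h - coord w i) < e).
Proof.
  intros Hv He. apply near0_forall_lt3. intros i Hi.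
  exact (near0_derivable_pt_lim _ _ _ (Hv i Hi) He).
Qed.

Lemma vnorm_vsub_coord q p :
  vnorm (vsub q p) = sum3 (fun i => Rabs (coord q i - coord p i)).
Proof.
  unfold vnorm, vsub, vadd, vscale, sum3; simpl.
  replace (c0 q + -1 * c0 p) with (c0 q - c0 p) by ring.
  replace (c1 q + -1 * c1 p) with (c1 q - c1 p) by ring.
  now replace (c2 q + -1 * c2 p) with (c2 q - c2 p) by ring.
Qed.

Lemma near_curve gam w (P : V3 -> Prop) :
  has_velocity gam w -> near (gam 0) P -> near0 (fun t => P (gam t)).
Proof.
  intros Hv [d [Hd HP]].
  set (K := sum3 (fun i => Rabs (coord w i) + 1)).
  assert (HK : 0 < K).
  { unfold K, sum3. pose proof (Rabs_pos (coord w 0)); pose proof (Rabs_pos (coord w 1));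
    pose proof (Rabs_pos (coord w 2)). lra. }
  apply (near0_mono (fun t => Rabs t < d / K /\ forall i, (i < 3)%nat -> t <> 0 ->
    Rabs ((coord (gam t) i - coord (gam 0) i) / t - coord w i) < 1)).
  - intros t [Ht Hq]. apply HP. destruct (Req_dec t 0) as [->|Ht0].
    + rewrite vnorm_vsub_diag. exact Hd.
    + rewrite vnorm_vsub_coord.
      apply Rle_lt_trans with (Rabs t * K).
      * replace (Rabs t * K) with (sum3 (fun i => Rabs t * (Rabs (coord w i) + 1)))
          by (unfold K, sum3; ring).
        apply sum3_le. intros i Hi. apply Rabs_le_of_quotient; auto.
      * apply (Rmult_lt_compat_r K) in Ht; [|lra].
        now replace (d / K * K) with d in Ht by (field; lra).
  - apply near0_and; [exists (d / K); split; [apply Rdiv_lt_0_compat; lra | auto]|].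
    apply has_velocity_near0; [exact Hv | lra].
Qed.

Lemma increment_by_partials f D p d q :
  (forall y, vnorm (vsub y p) < d -> forall i, (i < 3)%nat ->
     dir_deriv_at f y (ebasis i) (D i y)) ->
  vnorm (vsub q p) < d ->
  exists xi : nat -> V3, (forall i, (i < 3)%nat -> vnorm (vsub (xi i) p) < d) /\
    f q - f p = sum3 (fun i => D i (xi i) * (coord q i - coord p i)).
Proof.
  intros HD Hq. rewrite vnorm_vsub_coord in Hq; unfold sum3 in Hq.
  set (u0 := coord q 0 - coord p 0) in *; set (u1 := coord q 1 - coord p 1) in *;
  set (u2 := coord q 2 - coord p 2) in *.
  assert (Hball : forall a b c, Rabs a <= Rabs u0 -> Rabs b <= Rabs u1 -> Rabs c <= Rabs u2 ->
                    vnorm (vsub (vadd p (mkV3 a b c)) p) < d).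
  { intros a b c Ha Hb Hc. rewrite vnorm_vsub_vadd_l, vnorm_mkV3. lra. }
  pose proof (Rabs_pos u0); pose proof (Rabs_pos u1); pose proof (Rabs_pos u2).
  destruct (MVT_line f (D 2%nat) (fun c => vadd p (mkV3 0 0 c)) (ebasis 2) u2) as [k2 [Hk2 E2]];
    [intro; vec_eq | intros c Hc; apply HD; [apply Hball; rewrite ?Rabs_R0 | lia]; lra |].
  destruct (MVT_line f (D 1%nat) (fun c => vadd p (mkV3 0 c u2)) (ebasis 1) u1) as [k1 [Hk1 E1]];
    [intro; vec_eq | intros c Hc; apply HD; [apply Hball; rewrite ?Rabs_R0 | lia]; lra |].
  destruct (MVT_line f (D 0%nat) (fun c => vadd p (mkV3 c u1 u2)) (ebasis 0) u0) as [k0 [Hk0 E0]];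
    [intro; vec_eq | intros c Hc; apply HD; [apply Hball; rewrite ?Rabs_R0 | lia]; lra |].
  exists (fun i => match i with
                   | 0%nat => vadd p (mkV3 k0 u1 u2)
                   | 1%nat => vadd p (mkV3 0 k1 u2)
                   | _ => vadd p (mkV3 0 0 k2) end).
  split.
  - intros [|[|[|i]]] Hi; try lia; apply Hball; rewrite ?Rabs_R0; lra.
  - replace (vadd p (mkV3 u0 u1 u2)) with q in E0 by (destruct p, q; unfold u0, u1, u2; vec_eq).
    replace (vadd p (mkV3 0 0 0)) with p in E2 by (destruct p; vec_eq).
    unfold sum3; fold u0 u1 u2. lra.
Qed.

Lemma chain_rule_curve f D p gam w :
  near p (fun y => forall i, (i < 3)%nat -> dir_deriv_at f y (ebasis i) (D i y)) ->
  (forall i, (i < 3)%nat -> cont_at (D i) p) ->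
  has_velocity gam w -> gam 0 = p ->
  derivable_pt_lim (fun t => f (gam t)) 0 (sum3 (fun i => coord w i * D i p)).
Proof.
  intros HD HC Hv Hg0. apply derivable_pt_lim_near0. intros e He.
  set (K := sum3 (fun i => Rabs (D i p) + Rabs (coord w i) + 1)).
  assert (HK : 0 < K).
  { apply Rlt_le_trans with (sum3 (fun _ => 1)); [unfold sum3; lra|].
    apply sum3_le. intros i _. pose proof (Rabs_pos (D i p)); pose proof (Rabs_pos (coord w i)).
    lra. }
  destruct (exists_small_factor e K He HK) as (eta & Heta & Heta1 & HetaK).
  destruct (near_and p _ _ HD (near_forall_lt3 p (fun i y => Rabs (D i y - D i p) < eta)
              (fun i Hi => HC i Hi eta Heta))) as [d [Hd Hgood]].
  apply (near0_mono (fun h => vnorm (vsub (gam h) p) < d /\ forall i, (i < 3)%nat ->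
    h <> 0 -> Rabs ((coord (gam h) i - coord (gam 0) i) / h - coord w i) < eta)).
  - intros h [Hh Hq] Hh0. rewrite Hg0 in Hq |- *.
    destruct (increment_by_partials f D p d (gam h)) as [xi [Hxi ->]];
      [intros y Hy; apply (Hgood y Hy) | exact Hh |].
    replace (sum3 (fun i => D i (xi i) * (coord (gam h) i - coord p i)) / h
             - sum3 (fun i => coord w i * D i p))
      with (sum3 (fun i => D i (xi i) * ((coord (gam h) i - coord p i) / h) - D i p * coord w i))
      by (unfold sum3; field; exact Hh0).
    apply Rlt_le_trans with (eta * K); [|exact HetaK].
    replace (eta * K) with (sum3 (fun i => eta * (Rabs (D i p) + Rabs (coord w i) + 1)))
      by (unfold K, sum3; ring).
    apply Rabs_sum3_lt. intros i Hi.
    apply Rabs_mult_sub_lt; [exact Heta1 | apply (Hgood _ (Hxi i Hi)) | apply Hq]; auto.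
  - apply near0_and.
    + apply (near_curve gam w (fun y => vnorm (vsub y p) < d) Hv). rewrite Hg0. exists d; auto.
    + now apply has_velocity_near0.
Qed.

(** * Symmetry of second partial derivatives *)

Section Schwarz.
Import Coquelicot.Coquelicot.

Variables (F : V3 -> R) (x : V3) (i j : nat).

Let plane u v := vadd (vadd x (vscale u (ebasis i))) (vscale v (ebasis j)).

Let has_mixed_partials y :=
  (exists l, dir_deriv_at F y (ebasis i) l) /\ (exists l, dir_deriv_at F y (ebasis j) l) /\
  (exists l, dir_deriv_at (partial j F) y (ebasis i) l) /\
  (exists l, dir_deriv_at (partial i F) y (ebasis j) l).

Hypothesis mixed_partials_near : near x has_mixed_partials.

Lemma plane_00 : plane 0 0 = x.
Proof. unfold plane; destruct x; vec_eq. Qed.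

Lemma plane_shift_i u v s : plane (u + s) v = vadd (plane u v) (vscale s (ebasis i)).
Proof. unfold plane; destruct x; vec_eq. Qed.

Lemma plane_shift_j u v s : plane u (v + s) = vadd (plane u v) (vscale s (ebasis j)).
Proof. unfold plane; destruct x; vec_eq. Qed.

Lemma locally_2d_plane (P : V3 -> Prop) : near x P -> locally_2d (fun u v => P (plane u v)) 0 0.
Proof.
  intros [d [Hd H]]. exists (mkposreal (d / 2) ltac:(lra)). intros u v Hu Hv; simpl in Hu, Hv.
  rewrite Rminus_0_r in Hu, Hv. apply H.
  replace (vsub (plane u v) x) with (vadd (vscale u (ebasis i)) (vscale v (ebasis j)))
    by (unfold plane, vsub; destruct x; vec_eq).
  eapply Rle_lt_trans; [apply vnorm_vadd_le|]. rewrite !vnorm_vscale, !vnorm_ebasis. lra.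
Qed.

Lemma locally_of_near0 u (P : R -> Prop) : near0 (fun s => P (u + s)) -> locally u P.
Proof.
  intros [d [Hd H]]. exists (mkposreal d Hd). intros z Hz.
  replace z with (u + (z - u)) by ring. apply H. exact Hz.
Qed.

Lemma is_derive_plane_i G u v :
  (exists l, dir_deriv_at G (plane u v) (ebasis i) l) ->
  is_derive (fun z => G (plane z v)) u (partial i G (plane u v)).
Proof.
  intro H. apply is_derive_Reals, derivable_pt_lim_shift. apply dd_spec in H.
  unfold dir_deriv_at in H.
  replace (fun t => G (plane (u + t) v)) with (fun t => G (vadd (plane u v) (vscale t (ebasis i))));
    [exact H|].
  apply functional_extensionality; intro t; now rewrite plane_shift_i.
Qed.

Lemma is_derive_plane_j G u v :
  (exists l, dir_deriv_at G (plane u v) (ebasis j) l) ->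
  is_derive (fun t => G (plane u t)) v (partial j G (plane u v)).
Proof.
  intro H. apply is_derive_Reals, derivable_pt_lim_shift. apply dd_spec in H.
  unfold dir_deriv_at in H.
  replace (fun t => G (plane u (v + t))) with (fun t => G (vadd (plane u v) (vscale t (ebasis j))));
    [exact H|].
  apply functional_extensionality; intro t; now rewrite plane_shift_j.
Qed.

Lemma is_derive_plane_ij u v : near (plane u v) has_mixed_partials ->
  is_derive (fun z => Derive (fun t => F (plane z t)) v) u
    (partial i (partial j F) (plane u v)).
Proof.
  intro Hn. apply (is_derive_ext_loc (fun z => partial j F (plane z v))).
  - apply locally_of_near0.
    apply (near0_mono (fun s => has_mixed_partials (vadd (plane u v) (vscale s (ebasis i))))).
    + intros s (_ & Hj & _). rewrite <- plane_shift_i in Hj. symmetry.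
      exact (is_derive_unique _ _ _ (is_derive_plane_j F _ _ Hj)).
    + now apply near_line.
  - apply is_derive_plane_i. apply near_center in Hn. apply Hn.
Qed.

Lemma is_derive_plane_ji u v : near (plane u v) has_mixed_partials ->
  is_derive (fun z => Derive (fun t => F (plane t z)) u) v
    (partial j (partial i F) (plane u v)).
Proof.
  intro Hn. apply (is_derive_ext_loc (fun z => partial i F (plane u z))).
  - apply locally_of_near0.
    apply (near0_mono (fun s => has_mixed_partials (vadd (plane u v) (vscale s (ebasis j))))).
    + intros s (Hi & _). rewrite <- plane_shift_j in Hi. symmetry.
      exact (is_derive_unique _ _ _ (is_derive_plane_i F _ _ Hi)).
    + now apply near_line.
  - apply is_derive_plane_j. apply near_center in Hn. apply Hn.
Qed.

Lemma continuity_2d_pt_plane (G : V3 -> R) :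
  cont_at G x -> continuity_2d_pt (fun u v => G (plane u v)) 0 0.
Proof.
  intros HG eps. rewrite plane_00. exact (locally_2d_plane _ (HG eps (cond_pos eps))).
Qed.

Lemma partial_comm :
  cont_at (partial i (partial j F)) x -> cont_at (partial j (partial i F)) x ->
  partial i (partial j F) x = partial j (partial i F) x.
Proof.
  intros Cij Cji.
  pose proof (locally_2d_plane _ (near_near _ _ mixed_partials_near)) as Hloc.
  pose proof (locally_2d_singleton _ _ _ Hloc) as H00; cbv beta in H00.
  rewrite <- plane_00, <- (is_derive_unique _ _ _ (is_derive_plane_ij 0 0 H00)),
    <- (is_derive_unique _ _ _ (is_derive_plane_ji 0 0 H00)).
  apply Schwarz.
  - refine (locally_2d_impl _ _ _ _ (locally_2d_forall _ 0 0 _) Hloc); intros u v Hn.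
    destruct (near_center _ _ Hn) as (Hi & Hj & _).
    repeat split; eexists;
      [apply is_derive_plane_i | apply is_derive_plane_j
      | apply is_derive_plane_ij | apply is_derive_plane_ji]; eauto.
  - apply (continuity_2d_pt_ext_loc (fun u v => partial i (partial j F) (plane u v)));
      [|exact (continuity_2d_pt_plane _ Cij)].
    refine (locally_2d_impl _ _ _ _ (locally_2d_forall _ 0 0 _) Hloc); intros u v Hn.
    symmetry. exact (is_derive_unique _ _ _ (is_derive_plane_ij u v Hn)).
  - apply (continuity_2d_pt_ext_loc (fun u v => partial j (partial i F) (plane u v)));
      [|exact (continuity_2d_pt_plane _ Cji)].
    refine (locally_2d_impl _ _ _ _ (locally_2d_forall _ 0 0 _) Hloc); intros u v Hn.
    symmetry. exact (is_derive_unique _ _ _ (is_derive_plane_ji u v Hn)).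
Qed.

End Schwarz.

Definition C1_near (f : V3 -> R) (p : V3) : Prop :=
  near p (fun y => forall i, (i < 3)%nat -> dir_deriv_at f y (ebasis i) (partial i f y))
  /\ cont_at f p /\ (forall i, (i < 3)%nat -> cont_at (partial i f) p).

Lemma cont_at_ext_near f g p : near p (fun y => f y = g y) -> cont_at f p -> cont_at g p.
Proof.
  intros Heq Hf e He.
  apply (near_mono p (fun y => f y = g y /\ Rabs (f y - f p) < e)).
  - intros y [Hy H]. now rewrite <- Hy, <- (near_center p _ Heq).
  - now apply near_and, Hf.
Qed.

Lemma C1_near_of_partials f D p :
  near p (fun y => forall i, (i < 3)%nat -> dir_deriv_at f y (ebasis i) (D i y)) ->
  cont_at f p -> (forall i, (i < 3)%nat -> cont_at (D i) p) -> C1_near f p.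
Proof.
  intros HD Hf HC. repeat split; [| exact Hf |].
  - refine (near_mono p _ _ _ HD). intros y H i Hi.
    unfold partial. rewrite (dd_eq _ _ _ _ (H i Hi)). exact (H i Hi).
  - intros i Hi. apply (cont_at_ext_near (D i)); [|exact (HC i Hi)].
    apply (near_mono p _ _ (fun y H => eq_sym (dd_eq _ _ _ _ (H i Hi))) HD).
Qed.

Lemma C1_near_plus f g p : C1_near f p -> C1_near g p -> C1_near (fun y => f y + g y) p.
Proof.
  intros (Df & Cf & Cdf) (Dg & Cg & Cdg).
  apply (C1_near_of_partials _ (fun i y => partial i f y + partial i g y)).
  - apply (near_mono p _ _ (fun y H i Hi => dir_deriv_at_plus _ _ _ _ _ _
      (proj1 H i Hi) (proj2 H i Hi))).
    now apply near_and.
  - now apply cont_at_plus.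
  - intros i Hi. now apply cont_at_plus; [apply Cdf | apply Cdg].
Qed.

Lemma C1_near_mult f g p : C1_near f p -> C1_near g p -> C1_near (fun y => f y * g y) p.
Proof.
  intros (Df & Cf & Cdf) (Dg & Cg & Cdg).
  apply (C1_near_of_partials _ (fun i y => partial i f y * g y + f y * partial i g y)).
  - apply (near_mono p _ _ (fun y H i Hi => dir_deriv_at_mult _ _ _ _ _ _
      (proj1 H i Hi) (proj2 H i Hi))).
    now apply near_and.
  - now apply cont_at_mult.
  - intros i Hi. apply cont_at_plus; apply cont_at_mult; auto.
Qed.

Lemma C1_near_partial_at f p i : C1_near f p -> (i < 3)%nat ->
  dir_deriv_at f p (ebasis i) (partial i f p).
Proof. intros [HD _] Hi. exact (near_center p _ HD i Hi). Qed.

Lemma smooth_partial O f i : (i < 3)%nat -> smooth O f -> smooth O (partial i f).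
Proof. intros Hi Hs k. exact (proj2 (proj2 (Hs (S k))) i Hi). Qed.

Lemma smooth_C1_near O f p : smooth O f -> near p O -> C1_near f p.
Proof.
  intros Hs HO. destruct (Hs 2%nat) as (Hc & Hd & Hp).
  repeat split.
  - apply (near_mono p O); [|exact HO]. intros y Sy i Hi. now apply dd_spec, Hd.
  - now apply Hc, near_center.
  - intros i Hi. now apply (proj1 (Hp i Hi)), near_center.
Qed.

Definition dot (u w : V3) : R := sum3 (fun i => coord u i * coord w i).

Definition grad (f : V3 -> R) (y : V3) : V3 := mkV3 (partial 0 f y) (partial 1 f y) (partial 2 f y).

Lemma vf_apply_dot X f y : vf_apply X f y = dot (X y) (grad f y).
Proof. reflexivity. Qed.

Lemma dot_comm u w : dot u w = dot w u.
Proof. unfold dot, sum3. ring. Qed.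

Lemma dot_vsub_vscale_l u w c z : dot (vsub u (vscale c w)) z = dot u z - c * dot w z.
Proof. unfold dot, sum3, vsub, vadd, vscale; simpl. ring. Qed.

Lemma dot_lin_comb_l w (c : nat -> R) (u : nat -> V3) z :
  (forall m, (m < 3)%nat -> coord w m = sum3 (fun k => c k * coord (u k) m)) ->
  dot w z = sum3 (fun k => c k * dot (u k) z).
Proof.
  intro H. unfold dot at 1, sum3 at 1. rewrite (H 0%nat), (H 1%nat), (H 2%nat) by lia.
  unfold dot, sum3. ring.
Qed.

Definition C1VF_near (X : VF) (p : V3) : Prop :=
  forall i, (i < 3)%nat -> C1_near (fun y => coord (X y) i) p.

Definition C2_near (f : V3 -> R) (p : V3) : Prop :=
  C1_near f p /\ forall i, (i < 3)%nat -> C1_near (partial i f) p.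

Lemma smooth_C2_near O f p : smooth O f -> near p O -> C2_near f p.
Proof.
  intros Hs HO. split; [now apply (smooth_C1_near O)|].
  intros i Hi. apply (smooth_C1_near O); [now apply smooth_partial | exact HO].
Qed.

Lemma smoothVF_C1VF_near O X p : smoothVF O X -> near p O -> C1VF_near X p.
Proof. intros HX HO i Hi. exact (smooth_C1_near O _ p (HX i Hi) HO). Qed.

Lemma vf_apply_C1_near X f p : C1VF_near X p -> C2_near f p -> C1_near (vf_apply X f) p.
Proof.
  intros HX [_ Hf]. unfold vf_apply, sum3.
  repeat apply C1_near_plus; apply C1_near_mult; first [apply HX | apply Hf]; lia.
Qed.

Lemma C2_near_partial_comm f p i j : C2_near f p -> (i < 3)%nat -> (j < 3)%nat ->
  partial i (partial j f) p = partial j (partial i f) p.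
Proof.
  intros [(Df & _) Hf] Hi Hj. apply partial_comm.
  - destruct (Hf i Hi) as (Dfi & _); destruct (Hf j Hj) as (Dfj & _).
    refine (near_mono p _ _ _ (near_and p _ _ Df (near_and p _ _ Dfi Dfj))).
    intros y (H & Hfi & Hfj). repeat split; eexists; auto.
  - apply (Hf j Hj); exact Hi.
  - apply (Hf i Hi); exact Hj.
Qed.

Lemma partial_sum3_mult (f g : nat -> V3 -> R) p j :
  (forall i, (i < 3)%nat -> dir_deriv_at (f i) p (ebasis j) (partial j (f i) p)) ->
  (forall i, (i < 3)%nat -> dir_deriv_at (g i) p (ebasis j) (partial j (g i) p)) ->
  partial j (fun y => sum3 (fun i => f i y * g i y)) p
  = sum3 (fun i => partial j (f i) p * g i p + f i p * partial j (g i) p).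
Proof.
  intros Hf Hg. apply dd_eq. unfold sum3.
  repeat apply dir_deriv_at_plus; apply dir_deriv_at_mult; first [apply Hf | apply Hg]; lia.
Qed.

Lemma vf_apply_bracket X Z f p : C1VF_near X p -> C1VF_near Z p -> C2_near f p ->
  vf_apply X (vf_apply Z f) p - vf_apply Z (vf_apply X f) p = vf_apply (bracket X Z) f p.
Proof.
  intros HX HZ Hf.
  assert (HD : forall Y, C1VF_near Y p -> forall j, (j < 3)%nat ->
            partial j (vf_apply Y f) p
            = sum3 (fun i => partial j (fun y => coord (Y y) i) p * partial i f p
                             + coord (Y p) i * partial j (partial i f) p)).
  { intros Y HY j Hj. apply (partial_sum3_mult (fun i y => coord (Y y) i) (fun i => partial i f));
      intros i Hi; apply C1_near_partial_at; auto; apply (proj2 Hf i Hi). }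
  unfold vf_apply at 1 3, sum3 at 1 2.
  rewrite !HD by (auto; lia). unfold sum3.
  rewrite (C2_near_partial_comm f p 0 1), (C2_near_partial_comm f p 0 2),
    (C2_near_partial_comm f p 1 2) by (auto; lia).
  unfold bracket, bracket_comp, vf_apply, sum3. simpl. ring.
Qed.

Lemma dA_bracket al X Z p :
  (forall i, (i < 3)%nat -> C1_near (fun y => coord (al y) i) p) ->
  C1VF_near X p -> C1VF_near Z p ->
  dA al p (X p) (Z p)
  = vf_apply X (fun y => form_eval al y (Z y)) p - vf_apply Z (fun y => form_eval al y (X y)) p
    - form_eval al p (bracket X Z p).
Proof.
  intros Hal HX HZ.
  assert (HD : forall Y, C1VF_near Y p -> forall j, (j < 3)%nat ->
            partial j (fun y => form_eval al y (Y y)) p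
            = sum3 (fun i => partial j (fun y => coord (al y) i) p * coord (Y p) i
                             + coord (al p) i * partial j (fun y => coord (Y y) i) p)).
  { intros Y HY j Hj. apply (partial_sum3_mult (fun i y => coord (al y) i) (fun i y => coord (Y y) i));
      intros i Hi; apply C1_near_partial_at; auto. }
  unfold vf_apply at 1 2, sum3 at 1 2.
  rewrite !HD by (auto; lia).
  unfold dA, form_eval, bracket, bracket_comp, vf_apply, sum3. simpl. ring.
Qed.

Lemma vf_apply_locally_const X f p : near p (fun y => f y = f p) -> vf_apply X f p = 0.
Proof.
  intro H. unfold vf_apply, sum3, partial.
  rewrite !(dd_eq _ _ _ _ (dir_deriv_at_locally_const f p _ H)). ring.
Qed.

Lemma derivative_along_curve f p gam w :
  C1_near f p -> has_velocity gam w -> gam 0 = p ->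
  derivable_pt_lim (fun t => f (gam t)) 0 (dot w (grad f p)).
Proof. intros (HD & _ & HC) Hv Hg0. exact (chain_rule_curve f _ p gam w HD HC Hv Hg0). Qed.

Lemma tangent_grad_zero f N y w :
  C1_near f y -> near y (fun z => N z -> f z = 0) -> tangent N y w -> dot w (grad f y) = 0.
Proof.
  intros Hf Hzero [gam [[HN Hg0] Hv]].
  apply (uniqueness_limite (fun t => f (gam t)) 0).
  - exact (derivative_along_curve f y gam w Hf Hv Hg0).
  - apply (derivable_pt_lim_ext_near0 (fun _ => 0)); [|apply derivable_pt_lim_const].
    rewrite <- Hg0 in Hzero.
    apply (near0_mono (fun t => N (gam t) -> f (gam t) = 0)); [intros t H; symmetry; auto|].
    exact (near_curve gam w _ Hv Hzero).
Qed.

Lemma near_neq0 f p : cont_at f p -> f p <> 0 -> near p (fun y => f y <> 0).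
Proof.
  intros Hf Hp. apply (near_mono p (fun y => Rabs (f y - f p) < Rabs (f p))).
  - intros y Hy Hy0. rewrite Hy0, Rminus_0_l, Rabs_Ropp in Hy. lra.
  - apply Hf, Rabs_pos_lt, Hp.
Qed.

Lemma derivN_div N f p q x w :
  C1_near p x -> C1_near q x -> q x <> 0 ->
  near x (fun z => N z -> q z <> 0 -> f z = p z / q z) ->
  derivN N f x w ((dot w (grad p x) * q x - dot w (grad q x) * p x) / (q x)²).
Proof.
  intros Hp Hq Hq0 Hf gam [HN Hg0] Hv.
  pose proof (derivable_pt_lim_div (fun t => p (gam t)) (fun t => q (gam t)) 0 _ _
    (derivative_along_curve p x gam w Hp Hv Hg0) (derivative_along_curve q x gam w Hq Hv Hg0)
    ltac:(cbv beta; rewrite Hg0; exact Hq0)) as Hdiv.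
  cbv beta in Hdiv. rewrite Hg0 in Hdiv.
  refine (derivable_pt_lim_ext_near0 _ _ _ _ Hdiv).
  rewrite <- Hg0 in Hf, Hq0. destruct Hq as (_ & Cq & _). rewrite <- Hg0 in Cq.
  apply (near0_mono (fun t => (N (gam t) -> q (gam t) <> 0 -> f (gam t) = p (gam t) / q (gam t))
                              /\ q (gam t) <> 0)).
  - intros t [Ht Hqt]. unfold div_fct. symmetry. auto.
  - exact (near_curve gam w _ Hv (near_and _ _ _ Hf (near_neq0 q _ Cq Hq0))).
Qed.

Definition det3 (u v w : V3) : R :=
  c0 u * (c1 v * c2 w - c2 v * c1 w) - c1 u * (c0 v * c2 w - c2 v * c0 w)
  + c2 u * (c0 v * c1 w - c1 v * c0 w).

Lemma det3_mul a r s u v w :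
  det3 a r s * det3 u v w =
  det3 (mkV3 (dot a u) (dot a v) (dot a w)) (mkV3 (dot r u) (dot r v) (dot r w))
       (mkV3 (dot s u) (dot s v) (dot s w)).
Proof. destruct a, r, s, u, v, w; unfold det3, dot, sum3; simpl. ring. Qed.

Lemma det3_neq0_of_dual u v w a r s :
  dot a u = 1 -> dot a v = 0 -> dot a w = 0 ->
  dot r v = 1 -> dot r w = 0 -> dot s v = 0 -> dot s w = 1 ->
  det3 u v w <> 0.
Proof.
  intros Hau Hav Haw Hrv Hrw Hsv Hsw H0.
  pose proof (det3_mul a r s u v w) as Hm.
  rewrite H0, Rmult_0_r, Hau, Hav, Haw, Hrv, Hrw, Hsv, Hsw in Hm.
  unfold det3 in Hm; simpl in Hm. lra.
Qed.

Lemma dot_eq0_of_det3_neq0 u v w d : det3 u v w <> 0 ->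
  dot d u = 0 -> dot d v = 0 -> dot d w = 0 -> d = vzero.
Proof.
  intros Hdet Hu Hv Hw.
  assert (Cramer : forall k, det3 u v w * coord d k =
     dot d u * coord (mkV3 (c1 v * c2 w - c2 v * c1 w) (c2 v * c0 w - c0 v * c2 w)
                           (c0 v * c1 w - c1 v * c0 w)) k
   + dot d v * coord (mkV3 (c1 w * c2 u - c2 w * c1 u) (c2 w * c0 u - c0 w * c2 u)
                           (c0 w * c1 u - c1 w * c0 u)) k
   + dot d w * coord (mkV3 (c1 u * c2 v - c2 u * c1 v) (c2 u * c0 v - c0 u * c2 v)
                           (c0 u * c1 v - c1 u * c0 v)) k).
  { intros [|[|k]]; destruct d, u, v, w; unfold det3, dot, sum3; simpl; ring. }
  rewrite Hu, Hv, Hw in Cramer.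
  assert (Hk : forall k, coord d k = 0).
  { intro k. apply (Rmult_eq_reg_l (det3 u v w)); [|exact Hdet]. rewrite Cramer. ring. }
  destruct d; unfold vzero; f_equal; [apply (Hk 0%nat) | apply (Hk 1%nat) | apply (Hk 2%nat)].
Qed.

(** * Adapted frames *)

Definition lower (g : V3 -> nat -> nat -> R) (y u : V3) : V3 :=
  mkV3 (sum3 (fun i => g y i 0%nat * coord u i)) (sum3 (fun i => g y i 1%nat * coord u i))
       (sum3 (fun i => g y i 2%nat * coord u i)).

Lemma ip_lower g y u w : ip g y u w = dot (lower g y u) w.
Proof. unfold ip, dot, lower, sum3; simpl. ring. Qed.

Lemma ip_comm g y u w : (forall i j, g y i j = g y j i) -> ip g y u w = ip g y w u.
Proof.
  intro Hg. unfold ip, sum3.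
  rewrite (Hg 1%nat 0%nat), (Hg 2%nat 0%nat), (Hg 2%nat 1%nat). ring.
Qed.

(* [pk] stands for v_k F and [dij] for v_i (v_j F). *)
Lemma curvature_identity (a p0 p2 d01 d10 d12 d21 c012 c122 : R) :
  p2 <> 0 -> p0 = a * p2 -> d01 = a * d21 ->
  d01 - d10 = c012 * p2 -> d12 - d21 = - p0 + c122 * p2 ->
  (d10 * p2 - d12 * p0) / p2² - a ^ 2 = - c012 - a * c122.
Proof.
  intros Hp2 Hp0 H01 B01 B12.
  replace d10 with (a * d21 - c012 * p2) by lra.
  replace d12 with (d21 - a * p2 + c122 * p2) by lra.
  rewrite Hp0. unfold Rsqr. field. exact Hp2.
Qed.

Section AdaptedFrame.

Variables (U : V3 -> Prop) (al0 : Form) (g : V3 -> nat -> nat -> R) (v0 : VF)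
  (N W : V3 -> Prop) (v1 v2 : VF) (A : nat -> nat -> nat -> V3 -> R).

Hypothesis contact : sR_contact U al0 g v0.
Hypothesis W_sub_U : forall y, W y -> U y.
Hypothesis frame : adapted_frame W N al0 g v1 v2.
Hypothesis structure : structure_functions W v0 v1 v2 A.

Local Notation v := (frame3 v0 v1 v2).

Lemma near_W y : W y -> near y W.
Proof. destruct frame as (HW & _). exact (HW y). Qed.

Lemma frame_C1VF_near k y : (k < 3)%nat -> W y -> C1VF_near (v k) y.
Proof.
  intros Hk Wy. destruct contact as (_ & _ & _ & _ & _ & _ & _ & Hv0 & _).
  destruct frame as (_ & Hv1 & Hv2 & _).
  destruct k as [|[|[|k]]]; try lia; simpl.
  - apply (smoothVF_C1VF_near U); [exact Hv0 | exact (near_mono y W U W_sub_U (near_W y Wy))].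
  - exact (smoothVF_C1VF_near W _ y Hv1 (near_W y Wy)).
  - exact (smoothVF_C1VF_near W _ y Hv2 (near_W y Wy)).
Qed.

Lemma al0_C1_near y i : W y -> (i < 3)%nat -> C1_near (fun z => coord (al0 z) i) y.
Proof.
  intros Wy Hi. destruct contact as (_ & Hal & _).
  exact (smooth_C1_near U _ y (Hal i Hi) (near_mono y W U W_sub_U (near_W y Wy))).
Qed.

Lemma form_eval_frame y : W y ->
  form_eval al0 y (v0 y) = 1 /\ form_eval al0 y (v1 y) = 0 /\ form_eval al0 y (v2 y) = 0.
Proof.
  intro Wy. destruct contact as (_ & _ & _ & _ & _ & _ & _ & _ & Hreeb).
  destruct frame as (_ & _ & _ & Hfr & _). destruct (Hfr y Wy) as (H1 & H2 & _).
  repeat split; [apply Hreeb, W_sub_U, Wy | exact H1 | exact H2].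
Qed.

Lemma form_eval_frame_locally_const k y : (k < 3)%nat -> W y ->
  near y (fun z => form_eval al0 z (v k z) = form_eval al0 y (v k y)).
Proof.
  intros Hk Wy. refine (near_mono y W _ _ (near_W y Wy)). intros z Wz.
  destruct (form_eval_frame y Wy) as (E0y & E1y & E2y), (form_eval_frame z Wz) as (E0z & E1z & E2z).
  destruct k as [|[|[|k]]]; try lia; simpl; congruence.
Qed.

Lemma structure_function_reeb i j y : (i < 3)%nat -> (j < 3)%nat -> W y ->
  A i j 0%nat y = - dA al0 y (v i y) (v j y).
Proof.
  intros Hi Hj Wy.
  rewrite (dA_bracket al0 (v i) (v j) y (fun k Hk => al0_C1_near y k Wy Hk)
             (frame_C1VF_near i y Hi Wy) (frame_C1VF_near j y Hj Wy)).
  rewrite !vf_apply_locally_const by (now apply form_eval_frame_locally_const).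
  unfold form_eval at 1. fold (dot (al0 y) (bracket (v i) (v j) y)).
  rewrite dot_comm, (dot_lin_comb_l _ (fun k => A i j k y) (fun k => v k y))
    by (intros m Hm; exact (structure i j Hi Hj y Wy m Hm)).
  unfold sum3; simpl. rewrite !(dot_comm _ (al0 y)).
  destruct (form_eval_frame y Wy) as (E0 & E1 & E2). unfold form_eval in E0, E1, E2.
  fold (dot (al0 y) (v0 y)) (dot (al0 y) (v1 y)) (dot (al0 y) (v2 y)) in E0, E1, E2.
  rewrite E0, E1, E2. ring.
Qed.

Lemma structure_function_010 y : W y -> A 0%nat 1%nat 0%nat y = 0.
Proof.
  intro Wy. rewrite structure_function_reeb by (auto; lia). simpl.
  destruct contact as (_ & _ & _ & _ & _ & _ & _ & _ & Hreeb).
  rewrite (proj2 (Hreeb y (W_sub_U y Wy))). ring.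
Qed.

Lemma structure_function_120 y : W y -> A 1%nat 2%nat 0%nat y = -1.
Proof.
  intro Wy. rewrite structure_function_reeb by (auto; lia). simpl.
  destruct frame as (_ & _ & _ & Hfr & _). destruct (Hfr y Wy) as (_ & _ & _ & _ & _ & H12).
  rewrite H12. ring.
Qed.

Lemma frame_det3_neq0 y : W y -> det3 (v0 y) (v1 y) (v2 y) <> 0.
Proof.
  intro Wy. destruct contact as (_ & _ & _ & _ & Hg & _).
  destruct frame as (_ & _ & _ & Hfr & _). destruct (Hfr y Wy) as (_ & _ & I11 & I22 & I12 & _).
  destruct (form_eval_frame y Wy) as (E0 & E1 & E2).
  apply (det3_neq0_of_dual _ _ _ (al0 y) (lower g y (v1 y)) (lower g y (v2 y)));
    rewrite <- ?ip_lower; auto.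
  rewrite ip_comm; [exact I12 | intros i j; apply Hg, W_sub_U, Wy].
Qed.

Variable a : V3 -> R.
Hypothesis DOT : is_DOT W N al0 v0 v2 a.

Section LocalEquation.

Variables (O : V3 -> Prop) (F : V3 -> R).
Hypothesis O_open : is_open O.
Hypothesis F_smooth : smooth O F.
Hypothesis F_submersion : forall y, O y -> exists i, (i < 3)%nat /\ partial i F y <> 0.
Hypothesis N_eq : forall y, O y -> (N y <-> F y = 0).

Lemma vf_apply_frame_C1_near k y : (k < 3)%nat -> O y -> W y -> C1_near (vf_apply (v k) F) y.
Proof.
  intros Hk Oy Wy. apply vf_apply_C1_near; [now apply frame_C1VF_near|].
  exact (smooth_C2_near O F y F_smooth (O_open y Oy)).
Qed.

Lemma grad_F_tangent z w : O z -> N z -> tangent N z w -> dot w (grad F z) = 0.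
Proof.
  intros Oz Nz. apply tangent_grad_zero.
  - exact (smooth_C1_near O F z F_smooth (O_open z Oz)).
  - refine (near_mono z O _ _ (O_open z Oz)). intros y Oy. apply N_eq, Oy.
Qed.

Lemma vf_apply_v1_F z : O z -> W z -> N z -> vf_apply v1 F z = 0.
Proof.
  intros Oz Wz Nz. destruct frame as (_ & _ & _ & _ & Htan).
  exact (grad_F_tangent z _ Oz Nz (Htan z Wz Nz)).
Qed.

Lemma vf_apply_v0_F z : O z -> W z -> N z -> regular N al0 z ->
  vf_apply v0 F z = a z * vf_apply v2 F z.
Proof.
  intros Oz Wz Nz Rz. pose proof (grad_F_tangent z _ Oz Nz (DOT z Wz Nz Rz)) as H.
  rewrite dot_vsub_vscale_l in H. rewrite !vf_apply_dot. lra.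
Qed.

Lemma vf_apply_v2_F_neq0 z : O z -> W z -> N z -> regular N al0 z -> vf_apply v2 F z <> 0.
Proof.
  intros Oz Wz Nz Rz H2.
  assert (Hgrad : grad F z = vzero).
  { apply (dot_eq0_of_det3_neq0 (v0 z) (v1 z) (v2 z)); [now apply frame_det3_neq0| | |];
      rewrite dot_comm, <- vf_apply_dot.
    - now rewrite vf_apply_v0_F, H2, Rmult_0_r.
    - now apply vf_apply_v1_F.
    - exact H2. }
  destruct (F_submersion z Oz) as (i & Hi & Hpi). apply Hpi.
  unfold grad, vzero in Hgrad. injection Hgrad as G0 G1 G2.
  destruct i as [|[|[|i]]]; auto; lia.
Qed.

Lemma regular_of_vf_apply_v2_F z : O z -> W z -> N z -> vf_apply v2 F z <> 0 -> regular N al0 z.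
Proof.
  intros Oz Wz Nz H2 Hiff. apply H2. rewrite vf_apply_dot.
  apply (grad_F_tangent z _ Oz Nz), Hiff.
  destruct (form_eval_frame z Wz) as (_ & _ & E2). exact E2.
Qed.

Lemma vf_apply_bracket_frame i j y : (i < 3)%nat -> (j < 3)%nat -> O y -> W y ->
  vf_apply (v i) (vf_apply (v j) F) y - vf_apply (v j) (vf_apply (v i) F) y
  = sum3 (fun k => A i j k y * vf_apply (v k) F y).
Proof.
  intros Hi Hj Oy Wy.
  rewrite vf_apply_bracket by (first [now apply frame_C1VF_near
                                     | exact (smooth_C2_near O F y F_smooth (O_open y Oy))]).
  rewrite vf_apply_dot. apply dot_lin_comb_l. intros m Hm. exact (structure i j Hi Hj y Wy m Hm).
Qed.

Lemma derivN_DOT_v1 x : O x -> W x -> N x -> regular N al0 x ->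
  derivN N a x (v1 x)
    ((vf_apply v1 (vf_apply v0 F) x * vf_apply v2 F x
      - vf_apply v1 (vf_apply v2 F) x * vf_apply v0 F x) / (vf_apply v2 F x)²).
Proof.
  intros Ox Wx Nx Rx. rewrite !vf_apply_dot with (X := v1).
  apply derivN_div.
  - exact (vf_apply_frame_C1_near 0 x ltac:(lia) Ox Wx).
  - exact (vf_apply_frame_C1_near 2 x ltac:(lia) Ox Wx).
  - now apply vf_apply_v2_F_neq0.
  - refine (near_mono x _ _ _ (near_and x _ _ (O_open x Ox) (near_W x Wx))).
    intros z [Oz Wz] Nz H2.
    rewrite (vf_apply_v0_F z Oz Wz Nz (regular_of_vf_apply_v2_F z Oz Wz Nz H2)).
    field. exact H2.
Qed.

Lemma vf_apply_v0_v1_F x : O x -> W x -> N x -> regular N al0 x ->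
  vf_apply v0 (vf_apply v1 F) x = a x * vf_apply v2 (vf_apply v1 F) x.
Proof.
  intros Ox Wx Nx Rx.
  pose proof (tangent_grad_zero _ N x _ (vf_apply_frame_C1_near 1 x ltac:(lia) Ox Wx)
    (near_mono x _ _ (fun z H Nz => vf_apply_v1_F z (proj1 H) (proj2 H) Nz)
       (near_and x _ _ (O_open x Ox) (near_W x Wx)))
    (DOT x Wx Nx Rx)) as H.
  rewrite dot_vsub_vscale_l in H. rewrite !vf_apply_dot. simpl in H. lra.
Qed.

Lemma curvature_of_transversality x : O x -> W x -> N x -> regular N al0 x ->
  exists v1a, derivN N a x (v1 x) v1a /\
    v1a - a x ^ 2 = - A 0%nat 1%nat 2%nat x - a x * A 1%nat 2%nat 2%nat x.
Proof.
  intros Ox Wx Nx Rx. eexists; split; [now apply derivN_DOT_v1|].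
  pose proof (vf_apply_bracket_frame 0 1 x ltac:(lia) ltac:(lia) Ox Wx) as B01.
  pose proof (vf_apply_bracket_frame 1 2 x ltac:(lia) ltac:(lia) Ox Wx) as B12.
  unfold sum3 in B01, B12; simpl in B01, B12.
  rewrite structure_function_010, vf_apply_v1_F in B01 by assumption.
  rewrite structure_function_120, vf_apply_v1_F in B12 by assumption.
  apply (curvature_identity _ _ _ (vf_apply v0 (vf_apply v1 F) x) _ _
           (vf_apply v2 (vf_apply v1 F) x)).
  - now apply vf_apply_v2_F_neq0.
  - now apply vf_apply_v0_F.
  - now apply vf_apply_v0_v1_F.
  - lra.
  - lra.
Qed.

End LocalEquation.

End AdaptedFrame.

Theorem mainTheorem5
  (U : V3 -> Prop) (al0 : Form) (g : V3 -> nat -> nat -> R) (v0 : VF)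
  (N : V3 -> Prop) (W : V3 -> Prop) (v1 v2 : VF)
  (A : nat -> nat -> nat -> V3 -> R) (a : V3 -> R) :
  sR_contact U al0 g v0 ->
  is_surface N ->
  (forall y, N y -> U y) ->
  (forall y, W y -> U y) ->
  adapted_frame W N al0 g v1 v2 ->
  structure_functions W v0 v1 v2 A ->
  is_DOT W N al0 v0 v2 a ->
  forall x, W x -> N x -> regular N al0 x ->
  exists v1a : R,
    derivN N a x (v1 x) v1a /\
    v1a - a x ^ 2 = - A 0%nat 1%nat 2%nat x - a x * A 1%nat 2%nat 2%nat x.
Proof.
  intros Hcontact Hsurf _ HWU Hframe Hstruct HDOT x Wx Nx Rx.
  destruct (Hsurf x Nx) as (O & F & HO & Ox & HF & Hsub & HNF).
  exact (curvature_of_transversality U al0 g v0 N W v1 v2 A Hcontact HWU Hframe Hstruct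
           a HDOT O F HO HF Hsub HNF x Ox Wx Nx Rx).
Qed.
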